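(* Let $\mathcal{F}$ be a representable flag matroid on $[n]$. Then the associated polymatroid $\mathcal{M}(\mathcal{F})$ is a representable polymatroid.
   Context: For a $k$-dimensional subspace $V\subseteq\mathbb{C}^n$, choose a $k\times n$ matrix whose rows span $V$; the matroid $M_V$ on $[n]$ has as bases the $k$-subsets of columns with nonzero maximal minor. A flag matroid of rank $\mathbf{k}=(k_1\le\dots\le k_s)$ on $[n]$ is a collection of set-theoretic flags $F^1\subseteq\dots\subseteq F^s$ with $|F^i|=k_i$; it is representable if there is a flag of subspaces $V_1\subseteq\dots\subseteq V_s\subsetneq\mathbb{C}^n$, $\dim V_i=k_i$, such that $\mathcal{F}$ consists exactly of the flags $B_1\subseteq\dots\subseteq B_s$ with each $B_i$ a basis of $M_{V_i}$. The base polytope of $\mathcal{F}$ is $P(\mathcal{F})=\mathrm{conv}\{\sum_i\mathbf{e}_{F^i}:F\in\mathcal{F}\}$, with $\mathbf{e}_B$ the indicator vector of $B$. A polymatroid on $E$ is given by a rank function $r:\mathcal{P}(E)\to\mathbb{Z}_{\ge0}$, $r(\emptyset)=0$, monotone and submodular; its base polytope is $\{x\in\mathbb{R}^E_{\ge0}:x\cdot\mathbf{e}_U\le r(U)\ \forall U,\ x\cdot\mathbf{e}_E=r(E)\}$, and a polymatroid is determined by its base polytope. The polytope $P(\mathcal{F})$ is the base polytope of a polymatroid; this polymatroid is denoted $\mathcal{M}(\mathcal{F})$. A polymatroid on $E$ is representable if there is a vector space $V$ and a map $\phi$ from $E$ to the set of subspaces of $V$ such that $r(A)=\dim\sum_{a\in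 A}\phi(a)$ for all $A\subseteq E$. *)

From mathcomp Require Import all_boot all_order all_algebra.
From mathcomp Require Import Rstruct complex.
Set Implicit Arguments. Unset Strict Implicit. Unset Printing Implicit Defensive.
Import Order.TTheory GRing.Theory Num.Theory.
Local Open Scope ring_scope.

Notation Real := Rdefinitions.R.
Notation Cplx := (complex Rdefinitions.R).

Definition flag (s n : nat) := {ffun 'I_s -> {set 'I_n}}.

(* B is a basis of the matroid M_V, where V is the row space of the k x n
   matrix A: B is the set of k columns indexed by some f : 'I_k -> 'I_n
   and the corresponding maximal minor is nonzero *)
Definition is_basis_of_mx (k n : nat) (A : 'M[Cplx]_(k, n)) (B : {set 'I_n}) : Prop :=
  exists f : 'I_k -> 'I_n, B = f @: [set: 'I_k] /\ \det (colsub f A) != 0.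

Definition representable_flag_matroid (s n : nat) (k : 'I_s -> nat)
    (F : {set flag s n}) : Prop :=
  (forall i j : 'I_s, (i <= j)%N -> (k i <= k j)%N) /\
  exists A : forall i : 'I_s, 'M[Cplx]_(k i, n),
    (forall i, \rank (A i) = k i) /\
    (forall i j : 'I_s, (i <= j)%N -> (A i <= A j)%MS) /\
    (forall i, (k i < n)%N) /\
    (forall f : flag s n,
       f \in F <-> ((forall i j : 'I_s, (i <= j)%N -> f i \subset f j) /\
                    (forall i, is_basis_of_mx (A i) (f i)))).

Definition flag_base_polytope (s n : nat) (F : {set flag s n}) (x : 'I_n -> Real) : Prop :=
  exists lam : flag s n -> Real,
    (forall f, 0 <= lam f) /\ \sum_(f in F) lam f = 1 /\
    forall j : 'I_n, x j = \sum_(f in F) lam f * (\sum_(i < s) (j \in f i)%:R).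

Definition polymatroid (n : nat) (r : {set 'I_n} -> nat) : Prop :=
  r set0 = 0%N /\
  (forall A B : {set 'I_n}, A \subset B -> (r A <= r B)%N) /\
  (forall A B : {set 'I_n}, (r (A :|: B) + r (A :&: B) <= r A + r B)%N).

Definition polymatroid_base_polytope (n : nat) (r : {set 'I_n} -> nat) (x : 'I_n -> Real) : Prop :=
  (forall j, 0 <= x j) /\
  (forall U : {set 'I_n}, \sum_(j in U) x j <= (r U)%:R) /\
  \sum_(j < n) x j = (r [set: 'I_n])%:R.

(* representable polymatroid: subspaces phi(a) of V = C^d (row spaces of
   square matrices), r(A) = dim sum_{a in A} phi(a) *)
Definition representable_polymatroid (n : nat) (r : {set 'I_n} -> nat) : Prop :=
  exists (d : nat) (phi : 'I_n -> 'M[Cplx]_d),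
    forall U : {set 'I_n}, r U = \rank (\sum_(a in U) phi a)%MS.

From mathcomp Require Import all_boot all_order all_algebra.
From mathcomp Require Import Rstruct complex.
From mathcomp Require Import ring lra.
Set Implicit Arguments. Unset Strict Implicit. Unset Printing Implicit Defensive.
Import Order.TTheory GRing.Theory Num.Theory.
Local Open Scope ring_scope.

(* The rank function is r(U) = sum_i rk_{V_i}(U), a sum of matroid rank
   functions, hence a polymatroid; putting the column vectors of the A_i into
   a direct sum (block-diagonal matrices) represents it. A flag of bases
   satisfies the rank inequalities since each B_i is independent, with
   equality on [n], so P(F) lies in the base polytope. Conversely, if in a
   point x of the base polytope some proper tight set cannot be enlarged by
   one element to a tight set, then two coordinates a <> b are separated by
   no tight set, and moving x along +-(e_a - e_b) until a new set becomes
   tight writes x as a convex combination of two points with more tight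
   sets. Otherwise x has a maximal chain of tight sets; growing the bases B_i
   greedily along it yields a flag whose vector is x, and the B_i are nested
   because V_i <= V_j forces every element dependent on a set in M_{V_j} to
   be dependent on it in M_{V_i}. *)

Section RowSpan.
Variables (K : fieldType) (m n : nat) (C : 'M[K]_(m, n)).
Implicit Types U V B P : {set 'I_m}.

Definition span_rows (U : {set 'I_m}) : 'M[K]_n := (\sum_(a in U) <<row a C>>)%MS.
Definition rank_rows (U : {set 'I_m}) : nat := \rank (span_rows U).

Lemma row_sub_span_rows a U : a \in U -> (row a C <= span_rows U)%MS.
Proof. by move=> aU; apply: (sumsmx_sup a) => //; rewrite genmxE. Qed.

Lemma span_rows_subP U p (B : 'M_(p, n)) :
  (forall a, a \in U -> (row a C <= B)%MS) -> (span_rows U <= B)%MS.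
Proof. by move=> UB; apply/sumsmx_subP => a aU; rewrite genmxE; apply: UB. Qed.

Lemma span_rowsS U V : U \subset V -> (span_rows U <= span_rows V)%MS.
Proof.
by move=> /subsetP UV; apply: span_rows_subP => a /UV; apply: row_sub_span_rows.
Qed.

Lemma rank_rowsS U V : U \subset V -> (rank_rows U <= rank_rows V)%N.
Proof. by move=> UV; apply/mxrankS/span_rowsS. Qed.

Lemma rank_rows0 : rank_rows set0 = 0%N.
Proof. by rewrite /rank_rows /span_rows big_set0 mxrank0. Qed.

Lemma rank_rowsT : rank_rows setT = \rank C.
Proof.
apply/eqmx_rank/andP; split; first by apply: span_rows_subP => a _; apply: row_sub.
by apply/row_subP => a; apply: row_sub_span_rows; rewrite inE.
Qed.

Lemma rank_rows_submod U V :
  (rank_rows (U :|: V) + rank_rows (U :&: V) <= rank_rows U + rank_rows V)%N.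
Proof.
rewrite /rank_rows -[(\rank (span_rows U) + _)%N]mxrank_sum_cap.
rewrite leq_add //; apply: mxrankS.
  apply: span_rows_subP => a; rewrite inE => /orP[aU|aV].
    exact: submx_trans (row_sub_span_rows aU) (addsmxSl _ _).
  exact: submx_trans (row_sub_span_rows aV) (addsmxSr _ _).
by rewrite sub_capmx !span_rowsS ?subsetIl ?subsetIr.
Qed.

Lemma rank_rowsU1 a U :
  rank_rows (a |: U) = (rank_rows U + ~~ (row a C <= span_rows U)%MS)%N.
Proof.
have UaU : (span_rows U <= span_rows (a |: U))%MS by apply/span_rowsS/subsetUr.
have aUU : (span_rows (a |: U) <= span_rows U + row a C)%MS.
  apply: span_rows_subP => b; rewrite in_setU1 => /orP[/eqP->|bU].
    exact: addsmxSr.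
  exact: submx_trans (row_sub_span_rows bU) (addsmxSl _ _).
have [aspan|aspan] /= := boolP (row a C <= span_rows U)%MS.
  rewrite addn0; apply/eqmx_rank/andP; split => //.
  by apply: submx_trans aUU _; rewrite addsmx_sub submx_refl.
apply/anti_leq/andP; split.
  apply: leq_trans (mxrankS aUU) _; apply: leq_trans (mxrank_adds_leqif _ _) _.
  by rewrite leq_add2l rank_leq_row.
rewrite addn1 ltn_neqAle (mxrankS UaU) andbT (mxrank_leqif_sup UaU).
by apply: contra aspan => /(submx_trans (row_sub_span_rows (setU11 a U))).
Qed.

Lemma rank_rows_card U : (rank_rows U <= #|U|)%N.
Proof.
have [N] := ubnP #|U|; elim: N U => // N IH U.
have [->|[a aU]] := set_0Vmem U; first by rewrite rank_rows0.
rewrite -(setD1K aU) rank_rowsU1 cardsU1 !inE eqxx /= ltnS => UN.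
by rewrite addnC leq_add ?leq_b1 ?IH.
Qed.

Lemma indep_cardI_leq B U :
  rank_rows B = #|B| -> (#|B :&: U| <= rank_rows U)%N.
Proof.
move=> indepB; apply: leq_trans (rank_rowsS (subsetIr B U)).
have := rank_rows_submod (B :&: U) (B :\: U).
rewrite setID (_ : _ :&: _ = set0) ?rank_rows0 ?addn0; last first.
  by apply/setP => j; rewrite !inE; case: (j \in U); rewrite ?andbF.
rewrite indepB -(cardsID U B) => /leq_trans/(_ (leq_add (leqnn _) (rank_rows_card _))).
by rewrite leq_add2r.
Qed.

Definition basis_in (B P : {set 'I_m}) :=
  [/\ B \subset P, (span_rows P <= span_rows B)%MS & rank_rows B = #|B|].

Lemma basis_in0 : basis_in set0 set0.
Proof. by rewrite /basis_in sub0set submx_refl rank_rows0 cards0. Qed.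

Lemma basis_in_setU1 B P b : basis_in B P -> b \notin P ->
  basis_in (if (row b C <= span_rows P)%MS then B else b |: B) (b |: P).
Proof.
move=> [BP PB indepB] bP.
have bB : b \notin B by apply: contra bP; apply: (subsetP BP).
case: ifP => [bspan|/negbT bspan]; split.
- exact: subset_trans BP (subsetUr _ _).
- apply: span_rows_subP => a; rewrite in_setU1 => /orP[/eqP->|aP].
    exact: submx_trans bspan PB.
  exact: submx_trans (row_sub_span_rows aP) PB.
- exact: indepB.
- exact: setUS.
- apply: span_rows_subP => a; rewrite in_setU1 => /orP[/eqP->|aP].
    exact/row_sub_span_rows/setU11.
  apply: submx_trans (row_sub_span_rows aP) (submx_trans PB _).
  exact/span_rowsS/subsetUr.
- rewrite rank_rowsU1 cardsU1 bB indepB addnC.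
  suff -> : (row b C <= span_rows B)%MS = false by [].
  by apply: contraNF bspan => /submx_trans; apply; apply: span_rowsS.
Qed.

End RowSpan.

Lemma span_rows_mulmxr (K : fieldType) m n p (C : 'M[K]_(m, n)) (D : 'M[K]_(n, p)) a U :
  (row a C <= span_rows C U)%MS -> (row a (C *m D) <= span_rows (C *m D) U)%MS.
Proof.
move=> /(submxMr D); rewrite row_mul => /submx_trans; apply.
rewrite sumsmxMr_gen; apply/sumsmx_subP => b bU.
by rewrite genmxE (eqmxMr _ (genmxE _)) -row_mul row_sub_span_rows.
Qed.

Lemma basis_of_mxP k n (A : 'M[Cplx]_(k, n)) (B : {set 'I_n}) :
  is_basis_of_mx A B <-> #|B| = k /\ rank_rows A^T B = k.
Proof.
have det_colsub (f : 'I_k -> 'I_n) :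
    (\det (colsub f A) != 0) = (\rank (rowsub f A^T) == k).
  rewrite -det_tr -unitfE -unitmxE -row_free_unit.
  by congr (row_free _); apply/matrixP => i j; rewrite !mxE.
split.
  case=> f [-> detf]; rewrite det_colsub in detf.
  set Bf := f @: _.
  have rank_ge : (k <= rank_rows A^T Bf)%N.
    rewrite -[X in (X <= _)%N](eqP detf); apply/mxrankS/row_subP => j.
    by rewrite row_rowsub row_sub_span_rows ?imset_f.
  have card_le : (#|Bf| <= k)%N.
    by rewrite -[k in (_ <= k)%N]card_ord -cardsT leq_imset_card.
  have rank_le := rank_rows_card A^T Bf.
  split; apply/anti_leq/andP; split => //.
    exact: leq_trans rank_ge rank_le.
  exact: leq_trans rank_le card_le.
move=> [cardB rankB].
pose f (j : 'I_k) : 'I_n := enum_val (cast_ord (esym cardB) j).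
have fB a : a \in B -> exists j, a = f j.
  by move=> aB; exists (cast_ord cardB (enum_rank_in aB a)); rewrite /f cast_ordK enum_rankK_in.
exists f; split.
  apply/setP => a; apply/idP/imsetP => [/fB[j ->]|[j _ ->]]; last exact: enum_valP.
  by exists j.
rewrite det_colsub eqn_leq rank_leq_row -{1}rankB.
apply/mxrankS/span_rows_subP => a /fB[j ->].
by rewrite -row_rowsub row_sub.
Qed.

Section BlockDiagonal.
Variables (K : fieldType) (s n : nat) (k : 'I_s -> nat).

Local Notation d := (\sum_(i < s) k i)%N.

Lemma mxdiag_mxcol (X : forall i, 'M[K]_(k i)) :
  \mxdiag_i X i = \mxcol_i (X i *m submxcol (1%:M : 'M[K]_d) i).
Proof.
by rewrite -[LHS]mulmx1 -[1%:M in LHS](submxcolK (p_ := k)) mul_mxdiag_mxcol.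
Qed.

Lemma sum_rank_rows_representable (C : forall i, 'M[K]_(n, k i)) :
  exists phi : 'I_n -> 'M[K]_d, forall U : {set 'I_n},
    (\sum_(i < s) rank_rows (C i) U)%N = \rank (\sum_(a in U) phi a)%MS.
Proof.
exists (fun a => \mxdiag_i <<row a (C i)>>%MS) => U.
rewrite -(rank_mxdiag (fun i => span_rows (C i) U)); apply/eqmx_rank/eqmxP.
have diag_row a : (\mxdiag_i <<row a (C i)>> :=:
    \sum_i <<<<row a (C i)>>%MS *m submxcol (1%:M : 'M[K]_d) i>>)%MS.
  by rewrite mxdiag_mxcol; apply: eqmx_col.
rewrite mxdiag_mxcol; apply: eqmx_trans (eqmx_col _) _; apply: eqmx_sym.
apply: eqmx_trans (eqmx_sums (fun a _ => diag_row a)) _.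
rewrite exchange_big /=; apply: eqmx_sums => i _.
exact: eqmx_trans (eqmx_sym (sumsmxMr_gen _ _ _)) (eqmx_sym (genmxE _)).
Qed.

End BlockDiagonal.

Section BasePolytope.
Variables (R : realFieldType) (n : nat) (r : {set 'I_n} -> nat).
Hypothesis r_submod : forall U V, (r (U :|: V) + r (U :&: V) <= r U + r V)%N.
Implicit Types (x : 'I_n -> R) (U V P Q W : {set 'I_n}).

Definition xsum x U := \sum_(j in U) x j.
Definition in_base x := (forall U, xsum x U <= (r U)%:R) /\ xsum x setT = (r setT)%:R.
Definition tight x U := xsum x U == (r U)%:R.
Definition nontight x := [set U | ~~ tight x U].
Definition tight_extendable x := [forall P, tight x P && (P != setT) ==>
   [exists b, (b \notin P) && tight x (b |: P)]].
Definition shift x (t : R) a b j := x j + t * ((j == a)%:R - (j == b)%:R).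

Lemma xsumUI x U V : xsum x (U :|: V) + xsum x (U :&: V) = xsum x U + xsum x V.
Proof.
rewrite /xsum !(big_mkcond (fun j => j \in _)) -!big_split; apply: eq_bigr => j _.
by rewrite !inE; case: (j \in U); case: (j \in V); rewrite /= ?addr0 ?add0r.
Qed.

Lemma tightUI x U V : in_base x -> tight x U -> tight x V ->
  tight x (U :|: V) /\ tight x (U :&: V).
Proof.
move=> [x_le _] /eqP tU /eqP tV.
have := x_le (U :|: V); have := x_le (U :&: V); have := xsumUI x U V.
have : ((r (U :|: V))%:R + (r (U :&: V))%:R <= (r U)%:R + (r V)%:R :> R).
  by rewrite -!natrD ler_nat r_submod.
by rewrite /tight tU tV => *; split; apply/eqP; lra.
Qed.

Lemma xsum_shift x t a b U :
  xsum (shift x t a b) U = xsum x U + t * ((a \in U)%:R - (b \in U)%:R).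
Proof.
have sum_eq c : \sum_(j in U) ((j == c)%:R : R) = (c \in U)%:R.
  have [cU|cU] := boolP (c \in U).
    by rewrite (bigD1 c) //= eqxx big1 ?addr0 // => j /andP[_ /negbTE->].
  by rewrite big1 // => j jU; case: eqP cU => // <-; rewrite jU.
by rewrite /xsum /shift big_split /= -mulr_sumr big_split /= sumrN !sum_eq.
Qed.

Lemma shift_in_base x a b : in_base x -> a != b ->
  (forall U, tight x U -> (a \in U) = (b \in U)) ->
  exists2 t, 0 < t &
    in_base (shift x t a b) /\ (#|nontight (shift x t a b)| < #|nontight x|)%N.
Proof.
move=> [x_le x_tot] ab insep.
pose separates U := (a \in U) && (b \notin U).
have sep_a : separates [set a] by rewrite /separates !inE eqxx eq_sym ab.
case: (arg_minP (fun U => (r U)%:R - xsum x U) sep_a) => U0 sepU0 minU0.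
set t := _ - _ in minU0.
have t_gt0 : 0 < t.
  rewrite lt_def /t subr_ge0 x_le andbT subr_eq0 eq_sym.
  by apply: contraL sepU0 => /insep; rewrite /separates => ->; rewrite andbN.
exists t => //.
have tight_shift U : tight x U -> tight (shift x t a b) U.
  by move=> tU; rewrite /tight xsum_shift (insep _ tU) subrr mulr0 addr0.
split; first split.
- move=> U; rewrite xsum_shift; have := x_le U.
  case aU: (a \in U); case bU: (b \in U) => /= x_leU; try lra.
  have /minU0 : separates U by rewrite /separates aU bU.
  lra.
- by rewrite xsum_shift !inE subrr mulr0 addr0.
apply/proper_card/properP; split.
  by apply/subsetP => U; rewrite !inE; apply/contra/tight_shift.
exists U0; rewrite !inE ?negbK.
  by apply/eqP => tU0; move: t_gt0; rewrite /t tU0 subrr ltxx.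
move: sepU0 => /andP[aU0 /negbTE bU0].
by rewrite /tight xsum_shift aU0 bU0 subr0 mulr1 /t addrC subrK.
Qed.

Lemma minimal_tight_inseparable x P Q U c d : in_base x -> tight x P -> tight x Q ->
  P \subset Q -> (forall W, tight x W -> P \proper W -> (#|Q| <= #|W|)%N) ->
  c \in Q :\: P -> d \in Q :\: P -> tight x U -> c \in U -> d \in U.
Proof.
move=> xB tP tQ PQ Qmin /setDP[cQ cP] /setDP[dQ dP] tU cU; apply/negPn/negP => dU.
have [_ tQU] := tightUI xB tQ tU.
have [tW _] := tightUI xB tP tQU.
have PW : P \proper P :|: Q :&: U.
  by apply/properP; split; [apply: subsetUl | exists c; rewrite // !inE cQ cU orbT].
have WQ : P :|: Q :&: U \proper Q.
  apply/properP; split; first by rewrite subUset PQ subsetIl.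
  by exists d; rewrite // !inE negb_or dP negb_and dU orbT.
by have := Qmin _ tW PW; rewrite leqNgt proper_card.
Qed.

Lemma not_tight_extendable_inseparable x : in_base x -> ~~ tight_extendable x ->
  exists a b, a != b /\ forall U, tight x U -> (a \in U) = (b \in U).
Proof.
move=> xB; rewrite negb_forall => /existsP[P].
rewrite negb_imply => /andP[/andP[tP PT] /existsPn P_max].
pose tight_above Q := tight x Q && (P \proper Q).
have tight_aboveT : tight_above setT by rewrite /tight_above /tight xB.2 eqxx properT.
case: (arg_minnP (fun Q => #|Q|) tight_aboveT) => Q /andP[tQ PQ] Qmin.
have Qmin' W : tight x W -> P \proper W -> (#|Q| <= #|W|)%N.
  by move=> tW PW; apply: Qmin; rewrite /tight_above tW.
have [PsubQ [a aQ aP]] := properP PQ.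
have aPQ : a |: P \proper Q.
  rewrite properEneq subUset sub1set aQ PsubQ !andbT.
  by apply: (contraNneq _ (P_max a)) => ->; rewrite aP tQ.
have [_ [b bQ baP]] := properP aPQ.
move: baP; rewrite in_setU1 negb_or => /andP[ba bP].
have aQP : a \in Q :\: P by rewrite inE aP.
have bQP : b \in Q :\: P by rewrite inE bP.
exists a, b; split; first by rewrite eq_sym.
move=> U tU; apply/idP/idP.
  exact: minimal_tight_inseparable xB tP tQ PsubQ Qmin' aQP bQP tU.
exact: minimal_tight_inseparable xB tP tQ PsubQ Qmin' bQP aQP tU.
Qed.

Lemma in_base_ind (Pr : ('I_n -> R) -> Prop) :
  (forall x, in_base x -> tight_extendable x -> Pr x) ->
  (forall x y z (l : R), 0 <= l <= 1 -> Pr y -> Pr z ->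
     (forall j, x j = l * y j + (1 - l) * z j) -> Pr x) ->
  forall x, in_base x -> Pr x.
Proof.
move=> Pr_ext Pr_conv x; have [N] := ubnP #|nontight x|.
elim: N x => // N IH x xN xB.
have [|/(not_tight_extendable_inseparable xB)[a [b [ab insep]]]] :=
  boolP (tight_extendable x); first exact: Pr_ext.
have [t1 t1_gt0 [yB yN]] := shift_in_base xB ab insep.
have ba : b != a by rewrite eq_sym.
have [t2 t2_gt0 [zB zN]] := shift_in_base xB ba (fun U tU => esym (insep U tU)).
have t12_gt0 : 0 < t1 + t2 by apply: addr_gt0.
apply: (Pr_conv x (shift x t1 a b) (shift x t2 b a) (t2 / (t1 + t2))).
- by rewrite divr_ge0 ?(ltW t2_gt0) ?(ltW t12_gt0) //= ler_pdivrMr // mul1r lerDr ltW.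
- exact: IH (leq_trans yN xN) yB.
- exact: IH (leq_trans zN xN) zB.
- by move=> j; rewrite /shift; field; rewrite gt_eqF.
Qed.

End BasePolytope.

Lemma flag_base_polytope_convex s n (F : {set flag s n}) x y z (l : Real) :
  0 <= l <= 1 -> flag_base_polytope F y -> flag_base_polytope F z ->
  (forall j, x j = l * y j + (1 - l) * z j) -> flag_base_polytope F x.
Proof.
move=> /andP[l_ge0 l_le1] [ly [ly_ge0 [ly1 yE]]] [lz [lz_ge0 [lz1 zE]]] xE.
exists (fun f => l * ly f + (1 - l) * lz f); split; [|split].
- by move=> f; rewrite addr_ge0 ?mulr_ge0 ?subr_ge0.
- by rewrite big_split /= -!mulr_sumr ly1 lz1 !mulr1 addrC subrK.
- move=> j; rewrite xE yE zE !mulr_sumr -big_split; apply: eq_bigr => f _ /=.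
  ring.
Qed.

Lemma flag_base_polytope_vertex s n (F : {set flag s n}) f x :
  f \in F -> (forall j, x j = \sum_(i < s) (j \in f i)%:R) -> flag_base_polytope F x.
Proof.
move=> fF xE; exists (fun g => (g == f)%:R); split; [|split].
- by move=> g; rewrite ler0n.
- by rewrite (bigD1 f) //= eqxx big1 ?addr0 // => g /andP[_ /negbTE->].
- move=> j; rewrite xE (bigD1 f) //= eqxx mul1r [X in _ + X]big1 ?addr0 //.
  by move=> g /andP[_ /negbTE->]; rewrite mul0r.
Qed.

Lemma sum_mem_card (T : finType) (B U : {set T}) : (\sum_(j in U) (j \in B) = #|B :&: U|)%N.
Proof.
rewrite -sum1_card [RHS](eq_bigl (fun j => (j \in U) && (j \in B))) ?big_mkcondr //.
by move=> j; rewrite inE andbC.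
Qed.

Section FlagMatroid.
Variables (s n : nat) (k : 'I_s -> nat) (A : forall i : 'I_s, 'M[Cplx]_(k i, n)).
Variable F : {set flag s n}.
Hypothesis rankA : forall i, \rank (A i) = k i.
Hypothesis A_nested : forall i j : 'I_s, (i <= j)%N -> (A i <= A j)%MS.
Hypothesis F_def : forall f : flag s n,
  f \in F <-> ((forall i j : 'I_s, (i <= j)%N -> f i \subset f j) /\
               (forall i, is_basis_of_mx (A i) (f i))).

Implicit Types U : {set 'I_n}.

(* The columns of [A i] become rows, so [rank_rows (C i)] is the rank function of M_{V_i}. *)
Local Notation C i := (A i)^T.

Definition flag_rank (U : {set 'I_n}) : nat := \sum_(i < s) rank_rows (C i) U.
Definition flag_vector (f : flag s n) (j : 'I_n) : nat := \sum_(i < s) (j \in f i).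

Lemma flag_rank_polymatroid : polymatroid flag_rank.
Proof.
split; first by rewrite /flag_rank big1 // => i _; rewrite rank_rows0.
split; first by move=> U V UV; apply: leq_sum => i _; apply: rank_rowsS.
by move=> U V; rewrite /flag_rank -!big_split; apply: leq_sum => i _; apply: rank_rows_submod.
Qed.

Lemma flag_rank_representable : representable_polymatroid flag_rank.
Proof. by have [phi rankE] := sum_rank_rows_representable (fun i => C i); exists _, phi. Qed.

Lemma rank_rowsT_tr i : rank_rows (C i) setT = k i.
Proof. by rewrite rank_rowsT mxrank_tr rankA. Qed.

Lemma row_span_rows_nested (i j : 'I_s) a U : (i <= j)%N ->
  (row a (C j) <= span_rows (C j) U)%MS -> (row a (C i) <= span_rows (C i) U)%MS.
Proof.
move=> /A_nested/submxP[D ->]; rewrite trmx_mul.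
exact: span_rows_mulmxr.
Qed.

Lemma flag_vector_sum_le f U : f \in F ->
  (\sum_(j in U) flag_vector f j <= flag_rank U)%N.
Proof.
move=> /F_def[_ f_basis]; rewrite exchange_big /=; apply: leq_sum => i _.
have [card_fi rank_fi] := (basis_of_mxP _ _).1 (f_basis i).
by rewrite sum_mem_card indep_cardI_leq // rank_fi card_fi.
Qed.

Lemma flag_vector_sumT f : f \in F -> (\sum_j flag_vector f j = flag_rank setT)%N.
Proof.
move=> /F_def[_ f_basis]; rewrite exchange_big /=; apply: eq_bigr => i _.
have [card_fi _] := (basis_of_mxP _ _).1 (f_basis i).
rewrite rank_rowsT_tr -card_fi -(setIT (f i)) -sum_mem_card setIT.
by apply: eq_bigl => j; rewrite inE.
Qed.

Definition greedy_chain (x : 'I_n -> Real) P (B : 'I_s -> {set 'I_n}) :=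
  [/\ tight flag_rank x P, forall i, basis_in (C i) (B i) P,
      forall i j : 'I_s, (i <= j)%N -> B i \subset B j
    & forall a, a \in P -> x a = (\sum_(i < s) (a \in B i))%:R].

Lemma greedy_chain0 x : greedy_chain x set0 (fun=> set0).
Proof.
split=> [|i|i j _|a]; rewrite ?sub0set ?inE //; last exact: basis_in0.
by rewrite /tight /xsum big_set0 flag_rank_polymatroid.1.
Qed.

Lemma greedy_chain_step x P B b : greedy_chain x P B -> b \notin P ->
  tight flag_rank x (b |: P) ->
  greedy_chain x (b |: P)
    (fun i => if (row b (C i) <= span_rows (C i) P)%MS then B i else b |: B i).
Proof.
move=> [tP B_basis B_nested xP] bP tbP.
set B' := fun i => _.
have bB' i : (b \in B' i) = ~~ (row b (C i) <= span_rows (C i) P)%MS.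
  have [BP _ _] := B_basis i; have bB : b \notin B i by apply: contra bP; apply: subsetP.
  by rewrite /B'; case: ifP; rewrite ?setU11 ?(negbTE bB).
split=> // [i|i j ij|a].
- exact: basis_in_setU1.
- rewrite /B'; case: ifP => [bi|/negbT bi]; case: ifP => [bj|/negbT bj].
  + exact: B_nested.
  + exact: subset_trans (B_nested _ _ ij) (subsetUr _ _).
  + by rewrite (row_span_rows_nested ij bj) in bi.
  + exact/setUS/B_nested.
rewrite in_setU1 => /orP[/eqP->|aP].
  have rank_b : flag_rank (b |: P) = (flag_rank P + \sum_(i < s) (b \in B' i))%N.
    by rewrite /flag_rank -big_split; apply: eq_bigr => i _; rewrite rank_rowsU1 bB'.
  move: tbP tP; rewrite /tight /xsum big_setU1 //= rank_b natrD => /eqP tbP /eqP tP.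
  lra.
have ab : a != b by apply: contraNneq bP => <-.
rewrite xP //; congr _%:R; apply: eq_bigr => i _.
by rewrite /B'; case: ifP; rewrite ?in_setU1 ?(negbTE ab).
Qed.

Lemma greedy_chain_flag x B : greedy_chain x setT B ->
  exists2 f, f \in F & forall j, x j = (flag_vector f j)%:R.
Proof.
move=> [_ B_basis B_nested xB]; exists [ffun i => B i]; last first.
  by move=> j; rewrite xB ?inE //; congr _%:R; apply: eq_bigr => i _; rewrite ffunE.
apply/F_def; split=> [i j ij|i]; rewrite !ffunE; first exact: B_nested.
have [_ TB indepB] := B_basis i.
have rankB : rank_rows (C i) (B i) = k i.
  apply: etrans (rank_rowsT_tr i); apply/anti_leq.
  by rewrite (mxrankS TB) rank_rowsS ?subsetT.
by apply/basis_of_mxP; rewrite -indepB.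
Qed.

Lemma tight_extendable_flag_vector (x : 'I_n -> Real) :
  in_base flag_rank x -> tight_extendable flag_rank x ->
  exists2 f, f \in F & forall j, x j = (flag_vector f j)%:R.
Proof.
move=> xB /forallP x_ext.
have chain t : (t <= n)%N -> exists P B, greedy_chain x P B /\ #|P| = t.
  elim: t => [_|t IH tn].
    by exists set0, (fun=> set0); split; [apply: greedy_chain0 | apply: cards0].
  have [P [B [chainPB cardP]]] := IH (ltnW tn).
  have PT : P != setT by apply: contraTneq tn => PT; rewrite -cardP PT cardsT card_ord ltnn.
  have [tP _ _ _] := chainPB.
  have /existsP[b /andP[bP tbP]] := implyP (x_ext P) (introT andP (conj tP PT)).
  exists (b |: P); eexists; split; first exact: greedy_chain_step chainPB bP tbP.
  by rewrite cardsU1 bP cardP.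
have [P [B [chainPB cardP]]] := chain n (leqnn n).
have PT : P = setT by apply/eqP; rewrite eqEcard subsetT cardsT card_ord cardP leqnn.
by rewrite PT in chainPB; apply: greedy_chain_flag chainPB.
Qed.

Lemma flag_base_polytope_sub x :
  flag_base_polytope F x -> polymatroid_base_polytope flag_rank x.
Proof.
move=> [lam [lam_ge0 [lam1 xE]]].
have xsumE U : \sum_(j in U) x j = \sum_(f in F) lam f * (\sum_(j in U) flag_vector f j)%:R.
  under eq_bigr => j _ do rewrite xE.
  rewrite exchange_big /=; apply: eq_bigr => f _.
  by rewrite !natr_sum mulr_sumr; apply: eq_bigr => j _; rewrite natr_sum.
split; [|split].
- by move=> j; rewrite xE sumr_ge0 // => f _; rewrite mulr_ge0 ?sumr_ge0.
- move=> U; rewrite xsumE.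
  apply: (@le_trans _ _ (\sum_(f in F) lam f * (flag_rank U)%:R)).
    by apply: ler_sum => f fF; rewrite ler_wpM2l // ler_nat flag_vector_sum_le.
  by rewrite -mulr_suml lam1 mul1r.
- have := xsumE setT; rewrite (eq_bigl xpredT) => [->|j]; last by rewrite inE.
  rewrite (eq_bigr (fun f => lam f * (flag_rank setT)%:R)) => [|f fF].
    by rewrite -mulr_suml lam1 mul1r.
  by rewrite (eq_bigl xpredT) ?flag_vector_sumT // => j; rewrite inE.
Qed.

Lemma polymatroid_base_polytope_sub x :
  polymatroid_base_polytope flag_rank x -> flag_base_polytope F x.
Proof.
move=> [_ [x_le x_tot]]; apply: (in_base_ind flag_rank_polymatroid.2.2).
- move=> y yB /(tight_extendable_flag_vector yB)[f fF yE].
  by apply: (flag_base_polytope_vertex fF) => j; rewrite yE natr_sum.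
- exact: flag_base_polytope_convex.
- by split=> //; rewrite /xsum (eq_bigl xpredT) // => j; rewrite inE.
Qed.

End FlagMatroid.

Theorem proposition7p5 (s n : nat) (k : 'I_s -> nat) (F : {set flag s n}) :
  representable_flag_matroid k F ->
  exists r : {set 'I_n} -> nat,
    polymatroid r /\
    (forall x : 'I_n -> Real, flag_base_polytope F x <-> polymatroid_base_polytope r x) /\
    representable_polymatroid r.
Proof.
move=> [_ [A [rankA [A_nested [_ F_def]]]]].
exists (flag_rank A); split; first exact: flag_rank_polymatroid.
split; last exact: flag_rank_representable.
move=> x; split; first exact: flag_base_polytope_sub.
exact: polymatroid_base_polytope_sub.
Qed.
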